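(* Consider a maxout network $\mathcal N$ with a single linear output. The set of parameter values $\theta$ for which the represented function has the same gradient on two distinct (nonempty) activation regions is a Lebesgue null set. In particular, for almost every $\theta$, the linear regions of the represented function and its (nonempty, full-dimensional) activation regions correspond to each other.
   Context: A rank-$K$ maxout unit computes $y\mapsto\max_{k\in[K]}\{w_k\cdot y+b_k\}$. The network has hidden layers whose coordinates are rank-$K$ maxout units followed by a linear output layer; hidden units are indexed by $z\in[N]$ and $\zeta_{z,k}(x;\theta)$ denotes the $k$-th pre-activation feature of unit $z$ as a function of the network input $x$. An activation pattern is a tuple $J=(J_z)_{z\in[N]}$ of nonempty sets $J_z\subseteq[K]$, with activation region $\mathcal R(J,\theta)=\{x:\arg\max_k\zeta_{z,k}(x;\theta)=J_z\ \forall z\}$; on each activation region the network is affine, with a constant gradient. A linear region is a maximal connected subset of $\mathbb{R}^{n_0}$ on which the represented function has constant gradient. *)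

From mathcomp Require Import all_boot all_order all_algebra.
From mathcomp Require Import reals.
Set Implicit Arguments. Unset Strict Implicit. Unset Printing Implicit Defensive.
Import Order.TTheory GRing.Theory Num.Theory.
Local Open Scope ring_scope.

Definition lebesgue_null (R : realType) (P : finType) (S : (P -> R) -> Prop) : Prop :=
  forall eps : R, 0 < eps ->
  exists a b : nat -> P -> R,
    (forall m p, a m p <= b m p) /\
    (forall th, S th -> exists m, forall p, a m p <= th p <= b m p) /\
    (forall N, \sum_(m < N) \prod_(p : P) (b m p - a m p) <= eps).

(* n0 = input dimension, ws = widths of the hidden layers (L = size ws),
   K = maxout rank.  Layer widths: wd 0 = n0, wd l.+1 = l-th hidden width. *)
Definition wd (n0 : nat) (ws : seq nat) (l : nat) : nat :=
  if l is l'.+1 then nth 0%N ws l' else n0.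

(* parameters of hidden layer l (0-based): for unit z of layer l+1, piece k,
   either the weight on coordinate j of layer l (Some j) or the bias (None) *)
Definition hid_param_at (n0 : nat) (ws : seq nat) (K : nat) (l : 'I_(size ws)) :=
  ('I_(wd n0 ws (nat_of_ord l).+1) * 'I_K * option 'I_(wd n0 ws l))%type.
Definition HidParam (n0 : nat) (ws : seq nat) (K : nat) :=
  {l : 'I_(size ws) & @hid_param_at n0 ws K l}.
(* all parameters: hidden ones, and the linear output layer
   (weight on the last hidden unit z (Some z), or output bias (None)) *)
Definition Param (n0 : nat) (ws : seq nat) (K : nat) :=
  (HidParam n0 ws K + option 'I_(wd n0 ws (size ws)))%type.

Definition Unit (n0 : nat) (ws : seq nat) :=
  {l : 'I_(size ws) & 'I_(wd n0 ws (nat_of_ord l).+1)}.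

Section Net.
Variables (R : realType) (n0 : nat) (ws : seq nat) (K : nat).
Variable th : Param n0 ws K -> R.

Definition maxK (g : 'I_K -> R) : R :=
  \big[Num.max/head 0 (map g (enum 'I_K))]_(k < K) g k.

Definition preact (hprev : nat -> R) (lo : 'I_(size ws))
    (zo : 'I_(wd n0 ws (nat_of_ord lo).+1)) (k : 'I_K) : R :=
  \sum_(j < wd n0 ws lo)
     th (inl (existT (@hid_param_at n0 ws K) lo (zo, k, Some j))) * hprev j
  + th (inl (existT (@hid_param_at n0 ws K) lo (zo, k, None))).

(* output of layer l (layer 0 = input x), coordinates as nat (0 outside) *)
Fixpoint layer (x : 'I_n0 -> R) (l : nat) : nat -> R :=
  if l is l'.+1 then fun z =>
    match (insub l' : option 'I_(size ws)) with
    | Some lo =>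
        match (insub z : option 'I_(wd n0 ws (nat_of_ord lo).+1)) with
        | Some zo => maxK (@preact (layer x l') lo zo)
        | None => 0
        end
    | None => 0
    end
  else fun j => if (insub j : option 'I_n0) is Some jo then x jo else 0.

Definition zeta (x : 'I_n0 -> R) (u : Unit n0 ws) (k : 'I_K) : R :=
  @preact (layer x (nat_of_ord (tag u))) (tag u) (tagged u) k.

Definition net (x : 'I_n0 -> R) : R :=
  \sum_(z < wd n0 ws (size ws))
     th (inr (Some z)) * layer x (size ws) z + th (inr None).

Definition act_region (J : {ffun Unit n0 ws -> {set 'I_K}}) (x : 'I_n0 -> R) : Prop :=
  forall u, [set k | [forall k', zeta x u k' <= zeta x u k]] = J u.

End Net.

Definition is_pattern (n0 : nat) (ws : seq nat) (K : nat)
  (J : {ffun Unit n0 ws -> {set 'I_K}}) : Prop :=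
  forall u, J u != set0.

Definition in_ball (R : realType) (n0 : nat) (x0 : 'I_n0 -> R) (r : R)
  (x : 'I_n0 -> R) : Prop := forall i, `|x i - x0 i| < r.

(* "the represented function has gradient g on the (full-dimensional)
   activation region R(J,theta)": some nonempty open ball lies in the region
   and the function is affine with gradient g on it *)
Definition region_has_gradient (R : realType) (n0 : nat) (ws : seq nat) (K : nat)
  (th : Param n0 ws K -> R) (J : {ffun Unit n0 ws -> {set 'I_K}})
  (g : 'I_n0 -> R) : Prop :=
  exists (x0 : 'I_n0 -> R) (r c : R), 0 < r /\
    forall x, in_ball x0 r x ->
      act_region th J x /\ net th x = \sum_(i < n0) g i * x i + c.

(* Fix for every hidden unit one piece of its pattern.  The network computed
   with these fixed pieces is affine in the input, agrees with the represented
   function on the activation region, and is affine in each parameter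
   separately.  If distinct patterns J, J' had the same gradient g, pick a unit
   u and a piece in J u but not in J' u, and selections of J and J' that differ
   at u: for either selection the slope F(1) - F(0) of the fixed-piece network
   F equals the sum of the coordinates of g.  So the parameter lies in the zero
   set of a multi-affine polynomial, which does not vanish at a parameter with
   all weights 1 except the piece of u selected for J'.  Finally, the zero set
   of a nonzero multi-affine polynomial is null: by induction on the number of
   variables it lies in the zero set of the leading coefficient, extended by a
   free coordinate, or in the graph of a locally Lipschitz function, which is
   covered by grid boxes of arbitrarily small total volume. *)

From mathcomp Require Import all_boot all_order all_algebra.
From mathcomp Require Import reals.
From mathcomp Require Import boolp ring lra zify.
Set Implicit Arguments. Unset Strict Implicit. Unset Printing Implicit Defensive.
Import Order.TTheory GRing.Theory Num.Theory.
Local Open Scope ring_scope.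

Lemma ler_sum_sub_uniq (R' : numDomainType) (T : eqType) (s t : seq T) (Q : pred T) (G : T -> R') :
  uniq s -> uniq t -> {subset s <= t} -> (forall y, Q y -> 0 <= G y) ->
  \sum_(y <- s | Q y) G y <= \sum_(y <- t | Q y) G y.
Proof.
move=> us ut st G_ge0.
have perm_s : perm_eq [seq y <- t | y \in s] s.
  apply: uniq_perm => [||y]; rewrite ?filter_uniq // mem_filter.
  by case: (boolP (y \in s)) => // /st ->.
rewrite -(perm_big _ perm_s) big_filter_cond big_mkcond [leRHS]big_mkcond /=.
by apply: ler_sum => y _; case: (y \in s); case: (boolP (Q y)) => //= /G_ge0.
Qed.

Lemma ltr_sum_at (R' : numDomainType) (I : finType) (F G : I -> R') (i0 : I) :
  (forall i, F i <= G i) -> F i0 < G i0 -> \sum_i F i < \sum_i G i.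
Proof.
move=> le_FG lt_i0; rewrite (bigD1 i0) //= [ltRHS](bigD1 i0) //=.
by rewrite ltr_leD // ler_sum.
Qed.

(** * Null sets *)

Section NullSets.
Variables (R : realType) (P : finType).
Implicit Types (D : {set P}) (A B : (P -> R) -> Prop) (th : P -> R).

(* Boxes only constrain the coordinates in [D].  The flag [used] lets a cover
   skip indices: when [D] is empty every box has volume 1. *)
Definition is_box_cover D A (eps : R) (used : nat -> bool) (a b : nat -> P -> R) :=
  [/\ forall m p, a m p <= b m p,
      forall th, A th -> exists m, used m /\ forall p, p \in D -> a m p <= th p <= b m p &
      forall N, \sum_(m < N | used m) \prod_(p in D) (b m p - a m p) <= eps].

Definition box_cover D A eps := exists used a b, is_box_cover D A eps used a b.

Definition null_on D A := forall eps, 0 < eps -> box_cover D A eps.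

Lemma null_on_sub D A B : (forall th, A th -> B th) -> null_on D B -> null_on D A.
Proof.
move=> AB nullB eps eps_gt0; have [used [a [b [ab coverB volB]]]] := nullB eps eps_gt0.
by exists used, a, b; split=> // th /AB /coverB.
Qed.

Lemma null_on0 D : null_on D (fun _ => False).
Proof.
move=> eps eps_gt0; exists (fun _ => false), (fun _ _ => 0), (fun _ _ => 0).
by split=> // N; rewrite big_mkcond big1 // ltW.
Qed.

Lemma box_cover_countable (T : countType) D A eps (used : T -> bool) (a b : T -> P -> R) :
  (forall t p, a t p <= b t p) ->
  (forall th, A th -> exists t, used t /\ forall p, p \in D -> a t p <= th p <= b t p) ->
  (forall s : seq T, uniq s -> \sum_(t <- s | used t) \prod_(p in D) (b t p - a t p) <= eps) ->
  box_cover D A eps.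
Proof.
move=> ab coverA volA.
pose dec m := @pickle_inv T m.
exists (fun m => if dec m is Some t then used t else false),
       (fun m => if dec m is Some t then a t else fun _ => 0),
       (fun m => if dec m is Some t then b t else fun _ => 0); split.
- by move=> m p; case: (dec m).
- by move=> th /coverA [t ht]; exists (pickle t); rewrite /dec pickleK_inv.
move=> N; have us : uniq (pmap dec (iota 0 N)).
  by apply: (pmap_uniq (@pickle_invK T)); apply: iota_uniq.
apply: le_trans (volA _ us).
have -> : iota 0 N = index_iota 0 N by rewrite /index_iota subn0.
rewrite big_mkcond [leRHS]big_mkcond big_pmap big_mkord.
by apply: ler_sum => m _; case: (dec m).
Qed.

Lemma sum_half_powers (N : nat) : \sum_(n < N) (2^-1 : R) ^+ n.+1 <= 1.
Proof.
suff -> : \sum_(n < N) (2^-1 : R) ^+ n.+1 = 1 - 2^-1 ^+ N.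
  by rewrite lerBlDr lerDl exprn_ge0 // invr_ge0 ler0n.
elim: N => [|N IH]; first by rewrite big_ord0 expr0 subrr.
by rewrite big_ord_recr /= IH !exprS; field.
Qed.

Lemma null_on_bigcup D (A : nat -> (P -> R) -> Prop) :
  (forall n, null_on D (A n)) -> null_on D (fun th => exists n, A n th).
Proof.
move=> nullA eps eps_gt0.
have epsn_gt0 n : 0 < eps * 2^-1 ^+ n.+1 by rewrite mulr_gt0 // exprn_gt0 // invr_gt0.
have /choice [cov covP] n : exists c : (nat -> bool) * (nat -> P -> R) * (nat -> P -> R),
    is_box_cover D (A n) (eps * 2^-1 ^+ n.+1) c.1.1 c.1.2 c.2.
  by have [used [a [b ?]]] := nullA n _ (epsn_gt0 n); exists (used, a, b).
apply: (@box_cover_countable (nat * nat)%type D _ eps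
  (fun t => (cov t.1).1.1 t.2) (fun t => (cov t.1).1.2 t.2) (fun t => (cov t.1).2 t.2)).
- by move=> t p; have [ab _ _] := covP t.1.
- move=> th [n An]; have [_ /(_ th An) [m hm] _] := covP n; by exists (n, m).
move=> s us.
have vol_ge0 t : 0 <= \prod_(p in D) ((cov t.1).2 t.2 p - (cov t.1).1.2 t.2 p).
  by apply: prodr_ge0 => p _; have [ab _ _] := covP t.1; rewrite subr_ge0.
pose M := (\max_(t <- s) maxn t.1 t.2).+1.
have sM : {subset s <= [seq (n, m) | n <- iota 0 M, m <- iota 0 M]}.
  move=> [n m] st; have := @leq_bigmax_seq _ s xpredT (fun t : nat * nat => maxn t.1 t.2) _ st isT.
  rewrite geq_max => /andP [nM mM].
  by apply: (allpairs_f pair); rewrite mem_iota add0n ltnS.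
have ugrid : uniq [seq (n, m) | n <- iota 0 M, m <- iota 0 M].
  by apply: allpairs_uniq; rewrite ?iota_uniq // => -[? ?] [? ?] _ _ [-> ->].
apply: (le_trans (ler_sum_sub_uniq us ugrid sM (fun t _ => vol_ge0 t))).
rewrite big_mkcond big_allpairs.
have -> : iota 0 M = index_iota 0 M by rewrite /index_iota subn0.
apply: le_trans (_ : \sum_(0 <= n < M) eps * 2^-1 ^+ n.+1 <= _).
  apply: ler_sum => n _; have [_ _ volA] := covP n.
  by apply: le_trans (volA M); rewrite big_mkord [X in _ <= X]big_mkcond.
by rewrite -mulr_sumr ger_pMr // big_mkord sum_half_powers.
Qed.

Lemma null_on_countable_union D (T : countType) (A : T -> (P -> R) -> Prop) :
  (forall t, null_on D (A t)) -> null_on D (fun th => exists t, A t th).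
Proof.
move=> nullA.
pose An n th := if @pickle_inv T n is Some t then A t th else False.
apply: (@null_on_sub _ _ (fun th => exists n, An n th)).
  by move=> th [t At]; exists (pickle t); rewrite /An pickleK_inv.
by apply: null_on_bigcup => n; rewrite /An; case: (pickle_inv n) => [t|]; last exact: null_on0.
Qed.

Lemma null_onU D A B : null_on D A -> null_on D B -> null_on D (fun th => A th \/ B th).
Proof.
move=> nullA nullB; apply: (@null_on_sub _ _ (fun th => exists b : bool, if b then A th else B th)).
  by move=> th [At|Bt]; [exists true | exists false].
by apply: null_on_countable_union => -[].
Qed.

Lemma null_on_setD1 D p A : p \in D -> null_on (D :\ p) A -> null_on D A.
Proof.
move=> pD nullA; apply: (@null_on_sub _ _ (fun th => exists j : nat, A th /\ `|th p| <= j%:R)).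
  move=> th At; exists (Num.bound `|th p|); split => //.
  exact/ltW/archi_boundP.
apply: null_on_bigcup => j eps eps_gt0.
have j_gt0 : 0 < (2 * j + 1)%:R :> R by rewrite ltr0n addn1.
have [used [a [b [ab coverA volA]]]] := nullA _ (divr_gt0 eps_gt0 j_gt0).
exists used, (fun m q => if q == p then - j%:R else a m q),
             (fun m q => if q == p then j%:R else b m q); split.
- by move=> m q; case: eqP => // _; apply: (le_trans (y := 0)); rewrite ?oppr_le0 ler0n.
- move=> th [/coverA [m [um hm]] thj]; exists m; split => // q qD.
  by case: eqP => [->|/eqP qp]; [rewrite -ler_norml | apply: hm; rewrite !inE qp].
have vol m : \prod_(q in D) ((if q == p then j%:R else b m q) - (if q == p then - j%:R else a m q))
    = (2 * j)%:R * \prod_(q in D :\ p) (b m q - a m q).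
  rewrite (big_setD1 p pD) /= eqxx opprK -natrD addnn -mul2n.
  by congr (_ * _); apply: eq_bigr => q; rewrite !inE => /andP [/negPf ->].
move=> N; under eq_bigr => m _ do rewrite vol.
rewrite -mulr_sumr (le_trans (ler_wpM2l (ler0n _ _) (volA N))) //.
by rewrite mulrCA ger_pMr // ler_pdivrMr // mul1r ler_nat; lia.
Qed.

Definition in_box D (n : nat) th := forall q, q \in D -> `|th q| <= n%:R.

Definition in_cell D (n N k : nat) (f : P -> 'I_k) th := forall q, q \in D ->
  - n%:R + (f q)%:R / N%:R <= th q <= - n%:R + (f q)%:R / N%:R + N%:R^-1.

Lemma grid_index (n N : nat) (t : R) : (0 < N)%N -> `|t| <= n%:R ->
  exists i : 'I_(2 * n * N).+1, - n%:R + i%:R / N%:R <= t <= - n%:R + i%:R / N%:R + N%:R^-1.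
Proof.
move=> N_gt0; rewrite ler_norml => /andP [ge_n le_n].
have N_gt0' : 0 < N%:R :> R by rewrite ltr0n.
have tn_ge0 : 0 <= (t + n%:R) * N%:R by apply: mulr_ge0; lra.
have /andP [lo hi] := truncn_itv tn_ge0; set i := Num.truncn _ in lo hi.
have le_i : (i <= 2 * n * N)%N.
  rewrite -(ler_nat R) (le_trans lo) // !natrM ler_pM2r // mulr2n mulrDl mul1r.
  by rewrite lerD2r.
exists (inord i); rewrite inordK ?ltnS //.
have i_le : i%:R / N%:R <= t + n%:R by rewrite ler_pdivrMr.
have le_i1 : t + n%:R <= i%:R / N%:R + N%:R^-1.
  rewrite -[X in _ <= _ + X]mul1r -mulrDl ler_pdivlMr // natr1; exact: ltW.
apply/andP; split; lra.
Qed.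

Lemma exists_cell D (n N : nat) th : (0 < N)%N -> in_box D n th ->
  exists2 f : {ffun P -> 'I_(2 * n * N).+1},
    f \in pffun_on ord0 D predT & in_cell D n N f th.
Proof.
move=> N_gt0 th_box.
have /fin_all_exists [g gP] q : exists i : 'I_(2 * n * N).+1,
    if q \in D then - n%:R + i%:R / N%:R <= th q <= - n%:R + i%:R / N%:R + N%:R^-1
    else i == ord0.
  case: (boolP (q \in D)) => qD; last by exists ord0.
  exact: grid_index N_gt0 (th_box q qD).
exists [ffun q => g q].
  apply/pffun_onP; split=> //; apply/subsetP => q; rewrite inE ffunE.
  by have := gP q; case: ifP => // _ ->.
by move=> q qD; have := gP q; rewrite qD ffunE.
Qed.

Lemma in_cell_dist D n N k (f : P -> 'I_k) th th' :
  in_cell D n N f th -> in_cell D n N f th' -> forall q, q \in D -> `|th q - th' q| <= N%:R^-1.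
Proof.
move=> cell cell' q qD; have := cell q qD; have := cell' q qD.
by rewrite ler_distl => /andP [? ?] /andP [? ?]; apply/andP; split; lra.
Qed.

Lemma root_dist_le (n : nat) (a a' b b' t t' La Lb Ma Mb s : R) :
  1 <= n%:R * `|a| -> 1 <= n%:R * `|a'| -> a * t + b = 0 -> a' * t' + b' = 0 ->
  `|a - a'| <= La * s -> `|b - b'| <= Lb * s -> `|a'| <= Ma -> `|b'| <= Mb ->
  `|t - t'| <= n%:R ^+ 2 * (Lb * Ma + Mb * La) * s.
Proof.
move=> a_big a'_big root root' da db a'_le b'_le.
have key : a * a' * (t - t') = (a - a') * b' + a' * (b' - b).
  have -> : b = - (a * t) by apply: (@addrI _ (a * t)); rewrite root addrN.
  have -> : b' = - (a' * t') by apply: (@addrI _ (a' * t')); rewrite root' addrN.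
  ring.
have aa'_big : 1 <= n%:R ^+ 2 * `|a * a'| by rewrite normrM; nra.
have : `|a * a'| * `|t - t'| <= (Lb * Ma + Mb * La) * s.
  rewrite -normrM key; apply: le_trans (ler_normD _ _) _; rewrite !normrM.
  have := normr_ge0 (a - a'); have := normr_ge0 b'; have := normr_ge0 a'.
  have := normr_ge0 (b' - b); rewrite distrC in db; nra.
have := normr_ge0 (t - t'); have := normr_ge0 (a * a'); have := exprn_ge0 2 (ler0n R n).
nra.
Qed.

Lemma grid_volume_le (n N d : nat) (C : R) : (0 < N)%N -> 0 <= C ->
  2 * C * N%:R^-1 * N%:R^-1 ^+ d *+ (2 * n * N).+1 ^ d <= 2 * C * (2 * n + 1)%:R ^+ d / N%:R.
Proof.
move=> N_gt0 C_ge0; have N_gt0' : 0 < N%:R :> R by rewrite ltr0n.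
rewrite -mulr_natr natrX -mulrA -exprMn [leRHS]mulrAC.
apply: ler_wpM2l; first by apply: divr_ge0 (ltW _) => //; apply: mulr_ge0.
apply: lerXn2r; rewrite ?nnegrE ?mulr_ge0 ?invr_ge0 //.
rewrite mulrC ler_pdivrMr // -natrM ler_nat; lia.
Qed.

Lemma null_on_lipschitz_graph D p (G : (P -> R) -> Prop) (n : nat) (C : R) :
  p \in D -> 0 <= C -> (forall th, G th -> in_box (D :\ p) n th) ->
  (forall th th' s, G th -> G th' -> (forall q, q \in D :\ p -> `|th q - th' q| <= s) ->
     `|th p - th' p| <= C * s) ->
  null_on D G.
Proof.
move=> pD C_ge0 G_box G_lip eps eps_gt0; set D' := D :\ p; set d := #|D'|.
pose N := (Num.bound (2 * C * (2 * n + 1)%:R ^+ d / eps)).+1.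
have N_gt0 : (0 < N)%N by []; have N_gt0' : 0 < N%:R :> R by rewrite ltr0n.
set s : R := N%:R^-1; have s_gt0 : 0 < s by rewrite invr_gt0.
have s_ge0 : 0 <= s := ltW s_gt0.
have Cs_ge0 : 0 <= C * s by apply: mulr_ge0 (ltW _).
have /choice [rep repP] (f : {ffun P -> 'I_(2 * n * N).+1}) : exists th0,
    (exists2 th, G th & in_cell D' n N f th) -> G th0 /\ in_cell D' n N f th0.
  have [[th ? ?]|noG] := pselect (exists2 th, G th & in_cell D' n N f th).
    by exists th.
  by exists (fun=> 0); move=> /noG.
pose used (f : {ffun P -> 'I_(2 * n * N).+1}) := f \in pffun_on ord0 D' predT.
pose lo f q := if q == p then rep f p - C * s else - n%:R + (f q)%:R * s.
pose hi f q := if q == p then rep f p + C * s else - n%:R + (f q)%:R * s + s.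
apply: (@box_cover_countable _ D G eps used lo hi).
- by move=> f q; rewrite /lo /hi; case: eqP => _; lra.
- move=> th Gth; have [f usedf cellf] := exists_cell N_gt0 (G_box th Gth).
  have [Grep cellrep] := repP f (ex_intro2 _ _ th Gth cellf).
  exists f; split => // q qD; rewrite /lo /hi; case: eqP => [->|/eqP qp].
    by rewrite -ler_distl; apply: G_lip Gth Grep (in_cell_dist cellf cellrep).
  by apply: cellf; rewrite !inE qp.
move=> fs ufs.
have vol f : \prod_(q in D) (hi f q - lo f q) = 2 * C * s * s ^+ d.
  rewrite (big_setD1 p pD) /= /hi /lo eqxx -prodr_const.
  rewrite [X in _ * X = _](eq_bigr (fun=> s)); first by congr (_ * _); ring.
  by move=> q; rewrite !inE => /andP [/negPf -> _]; ring.
apply: le_trans (_ : \sum_(f | used f) \prod_(q in D) (hi f q - lo f q) <= _).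
  apply: ler_sum_sub_uniq => //; first exact: index_enum_uniq.
    by move=> f _; rewrite mem_index_enum.
  by move=> f _; rewrite vol !mulr_ge0 ?exprn_ge0 ?ler0n.
under eq_bigr => f _ do rewrite vol.
rewrite sumr_const card_pffun_on card_ord.
apply: le_trans (grid_volume_le _ _ N_gt0 C_ge0) _.
rewrite ler_pdivrMr // -ler_pdivrMl // mulrC; apply: ltW.
have bound_ge0 : 0 <= 2 * C * (2 * n + 1)%:R ^+ d / eps.
  by rewrite divr_ge0 ?mulr_ge0 ?exprn_ge0 ?ler0n // ltW.
by apply: lt_le_trans (archi_boundP bound_ge0) _; rewrite ler_nat.
Qed.

Definition lipschitz_on_boxes D (f : (P -> R) -> R) := forall n : nat, exists M L : R,
  [/\ 0 <= M, 0 <= L, forall th, in_box D n th -> `|f th| <= M &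
      forall th th' s, in_box D n th -> in_box D n th' ->
        (forall q, q \in D -> `|th q - th' q| <= s) -> `|f th - f th'| <= L * s].

Lemma exists_box D th (e : R) : 0 <= e -> exists n : nat, in_box D n th /\ e <= n%:R.
Proof.
move=> e_ge0; set B := \sum_q `|th q|.
have le_B q : `|th q| <= B by rewrite /B (bigD1 q) //= lerDl sumr_ge0.
have Be_ge0 : 0 <= B + e by rewrite addr_ge0 ?sumr_ge0.
have B_lt := ltW (archi_boundP Be_ge0).
exists (Num.bound (B + e)); split; last by apply: le_trans B_lt; rewrite lerDr sumr_ge0.
by move=> q _; apply: le_trans (le_B q) (le_trans _ B_lt); rewrite lerDl.
Qed.

Lemma null_on_root_set D p (a b : (P -> R) -> R) : p \in D ->
  lipschitz_on_boxes (D :\ p) a -> lipschitz_on_boxes (D :\ p) b ->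
  null_on D (fun th => a th != 0 /\ a th * th p + b th = 0).
Proof.
move=> pD lip_a lip_b.
apply: (@null_on_sub _ _ (fun th => exists n : nat,
  [/\ in_box (D :\ p) n th, 1 <= n%:R * `|a th| & a th * th p + b th = 0])).
  move=> th [a_neq0 root].
  have inv_ge0 : 0 <= `|a th|^-1 by rewrite invr_ge0.
  have [n [th_box le_n]] := exists_box (D :\ p) th inv_ge0.
  by exists n; split => //; rewrite -ler_pdivrMr ?normr_gt0 // mul1r.
apply: null_on_bigcup => n.
have [Ma [La [Ma_ge0 La_ge0 a_bnd a_lip]]] := lip_a n.
have [Mb [Lb [Mb_ge0 Lb_ge0 b_bnd b_lip]]] := lip_b n.
apply: (@null_on_lipschitz_graph _ _ _ n (n%:R ^+ 2 * (Lb * Ma + Mb * La)) pD).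
- by rewrite mulr_ge0 ?exprn_ge0 ?addr_ge0 ?mulr_ge0.
- by move=> th [].
move=> th th' s [box a_big root] [box' a'_big root'] dist.
by apply: root_dist_le a_big a'_big root root' _ _ (a_bnd _ box') (b_bnd _ box');
  [apply: a_lip | apply: b_lip].
Qed.

(** * Zero sets of multi-affine functions *)

Definition upd th p (t : R) : P -> R := fun q => if q == p then t else th q.

Definition depends_only D (f : (P -> R) -> R) :=
  forall th th', (forall q, q \in D -> th q = th' q) -> f th = f th'.
Definition independent_of p (f : (P -> R) -> R) := forall th t, f (upd th p t) = f th.
Definition affine_in p (f : (P -> R) -> R) :=
  forall th t, f (upd th p t) = f (upd th p 0) + t * (f (upd th p 1) - f (upd th p 0)).
Definition multiaffine_on D f := depends_only D f /\ forall p, affine_in p f.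

Lemma upd_id th p : upd th p (th p) = th.
Proof. by apply: funext => q; rewrite /upd; case: eqP => // ->. Qed.

Lemma upd_upd th p t t' : upd (upd th p t) p t' = upd th p t'.
Proof. by apply: funext => q; rewrite /upd; case: eqP. Qed.

Lemma upd_comm th p q t t' : p != q -> upd (upd th p t) q t' = upd (upd th q t') p t.
Proof.
move=> pq; apply: funext => r; rewrite /upd; case: (eqVneq r q) => [->|//].
by rewrite eq_sym (negPf pq).
Qed.

Lemma affine_in_indep p f : independent_of p f -> affine_in p f.
Proof. by move=> f_indep th t; rewrite !f_indep; ring. Qed.

Lemma affine_in_coord p q : affine_in p (fun th => th q).
Proof. by move=> th t; rewrite /upd; case: (q == p); ring. Qed.

Lemma affine_inD p f g : affine_in p f -> affine_in p g -> affine_in p (fun th => f th + g th).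
Proof. by move=> f_aff g_aff th t; rewrite f_aff g_aff; ring. Qed.

Lemma affine_inB p f g : affine_in p f -> affine_in p g -> affine_in p (fun th => f th - g th).
Proof. by move=> f_aff g_aff th t; rewrite f_aff g_aff; ring. Qed.

Lemma affine_in_sum p m (F : 'I_m -> (P -> R) -> R) :
  (forall j, affine_in p (F j)) -> affine_in p (fun th => \sum_j F j th).
Proof.
move=> F_aff th t; rewrite (eq_bigr _ (fun j _ => F_aff j th t)) big_split /=.
by rewrite -sumrB mulr_sumr.
Qed.

Lemma affine_in_coordM p q f :
  (q = p -> independent_of p f) -> (q != p -> affine_in p f) -> affine_in p (fun th => th q * f th).
Proof.
move=> f_indep f_aff th t; case: (eqVneq q p) => [qp|qp].
  by rewrite !(f_indep qp) qp /upd eqxx; ring.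
by rewrite (f_aff qp) /upd (negPf qp); ring.
Qed.

Lemma affine_in_upd p c f : (forall q, affine_in q f) ->
  forall q, affine_in q (fun th => f (upd th p c)).
Proof.
move=> f_aff q th t; case: (eqVneq q p) => [->|qp]; first by rewrite !upd_upd; ring.
by rewrite !(upd_comm _ _ _ qp) f_aff.
Qed.

Lemma depends_only_upd D p c f : depends_only D f -> depends_only (D :\ p) (fun th => f (upd th p c)).
Proof.
move=> f_dep th th' eq_th; apply: f_dep => q qD; rewrite /upd; case: eqP => // /eqP qp.
by apply: eq_th; rewrite !inE qp.
Qed.

Lemma multiaffine_split D p f : multiaffine_on D f ->
  [/\ multiaffine_on (D :\ p) (fun th => f (upd th p 1) - f (upd th p 0)),
      multiaffine_on (D :\ p) (fun th => f (upd th p 0)) &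
      forall th, f th = (f (upd th p 1) - f (upd th p 0)) * th p + f (upd th p 0)].
Proof.
move=> [f_dep f_aff]; split.
- split=> [th th' eq_th|q]; last by apply: affine_inB; apply: affine_in_upd.
  by rewrite (depends_only_upd 1 f_dep eq_th) (depends_only_upd 0 f_dep eq_th).
- by split; [apply: depends_only_upd | apply: affine_in_upd].
by move=> th; rewrite -{1}(upd_id th p) f_aff; ring.
Qed.

Lemma lipschitz_on_boxes_const D f : (forall th th', f th = f th') -> lipschitz_on_boxes D f.
Proof.
move=> f_const n; exists `|f (fun _ => 0)|, 0; split => // [th _|th th' s _ _ _].
  by rewrite (f_const th (fun _ => 0)).
by rewrite (f_const th th') subrr normr0 mul0r.
Qed.

Lemma lipschitz_on_boxes_affine D p a b : p \in D ->
  lipschitz_on_boxes (D :\ p) a -> lipschitz_on_boxes (D :\ p) b ->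
  lipschitz_on_boxes D (fun th => a th * th p + b th).
Proof.
move=> pD lip_a lip_b n.
have [Ma [La [Ma_ge0 La_ge0 a_bnd a_lip]]] := lip_a n.
have [Mb [Lb [Mb_ge0 Lb_ge0 b_bnd b_lip]]] := lip_b n.
have boxD' th : in_box D n th -> in_box (D :\ p) n th.
  by move=> th_box q; rewrite inE => /andP [_]; apply: th_box.
exists (Mb + n%:R * Ma), (Lb + n%:R * La + Ma); split.
- by rewrite addr_ge0 ?mulr_ge0.
- by rewrite !addr_ge0 ?mulr_ge0.
- move=> th th_box; have th_box' := boxD' _ th_box.
  apply: le_trans (ler_normD _ _) _; rewrite normrM addrC lerD ?b_bnd // mulrC.
  by rewrite ler_pM ?normr_ge0 ?a_bnd ?th_box.
move=> th th' s th_box th'_box dist.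
have th_box' := boxD' _ th_box; have th'_box' := boxD' _ th'_box.
have dist' q : q \in D :\ p -> `|th q - th' q| <= s.
  by rewrite inE => /andP [_]; apply: dist.
have -> : a th * th p + b th - (a th' * th' p + b th')
    = (a th - a th') * th p + a th' * (th p - th' p) + (b th - b th') by ring.
have -> : (Lb + n%:R * La + Ma) * s = La * s * n%:R + Ma * s + Lb * s by ring.
apply: le_trans (ler_normD _ _) _; rewrite lerD ?(b_lip _ _ _ th_box' th'_box') //.
apply: le_trans (ler_normD _ _) _; rewrite !normrM.
by rewrite lerD // ler_pM ?normr_ge0 ?(a_lip _ _ _ th_box' th'_box') ?a_bnd ?th_box ?dist.
Qed.

Lemma multiaffine_lipschitz D f : multiaffine_on D f -> lipschitz_on_boxes D f.
Proof.
have [k] := ubnP #|D|; elim: k D f => // k IH D f ltDk f_ma.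
have [D0|[p pD]] := set_0Vmem D.
  apply: lipschitz_on_boxes_const => th th'.
  by apply: f_ma.1 => q; rewrite D0 inE.
have ltD'k : (#|D :\ p| < k)%N by move: ltDk; rewrite (cardsD1 p D) pD.
have [ma_a ma_b f_eq] := multiaffine_split p f_ma.
have -> : f = (fun th => (f (upd th p 1) - f (upd th p 0)) * th p + f (upd th p 0)).
  exact: funext.
by apply: lipschitz_on_boxes_affine; [| apply: IH ..].
Qed.

Lemma multiaffine_zero_null D f :
  multiaffine_on D f -> (exists th, f th != 0) -> null_on D (fun th => f th = 0).
Proof.
have [k] := ubnP #|D|; elim: k D f => // k IH D f ltDk f_ma [th0 f_th0].
have [D0|[p pD]] := set_0Vmem D.
  apply: null_on_sub (null_on0 _) => th f_th; move: f_th0.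
  by rewrite (f_ma.1 th0 th) ?f_th ?eqxx // => q; rewrite D0 inE.
have ltD'k : (#|D :\ p| < k)%N by move: ltDk; rewrite (cardsD1 p D) pD.
have [ma_a ma_b f_eq] := multiaffine_split p f_ma.
pose a th := f (upd th p 1) - f (upd th p 0); pose b th := f (upd th p 0).
have f_ab th : f th = a th * th p + b th := f_eq th.
have [[th1 a_th1]|a0] := pselect (exists th, a th != 0).
  apply: (@null_on_sub _ _ (fun th => a th = 0 \/ a th != 0 /\ a th * th p + b th = 0)).
    by move=> th f_th; case: (eqVneq (a th) 0); [left | right; rewrite -f_ab].
  apply: null_onU; first by apply: (null_on_setD1 pD); apply: (IH _ _ ltD'k ma_a); exists th1.
  by apply: null_on_root_set => //; apply: multiaffine_lipschitz.
have f_b th : f th = b th.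
  have /negPn/eqP a_th : ~~ (a th != 0) by apply/negP => ?; apply: a0; exists th.
  by rewrite f_ab a_th mul0r add0r.
apply: (null_on_setD1 pD); apply: null_on_sub (IH _ _ ltD'k ma_b _) => [th|].
  by rewrite f_b.
by exists th0; move: f_th0; rewrite f_b.
Qed.

Lemma null_on_setT_lebesgue (p0 : P) A : null_on setT A -> lebesgue_null A.
Proof.
move=> nullA eps eps_gt0; have [used [a [b [ab coverA volA]]]] := nullA eps eps_gt0.
exists (fun m p => if used m then a m p else 0), (fun m p => if used m then b m p else 0).
split; first by move=> m p; case: (used m).
split=> [th /coverA [m [um th_box]]|N]; first by exists m => p; rewrite um th_box ?inE.
apply: le_trans (volA N); rewrite [leRHS]big_mkcond; apply: ler_sum => m _.
case: (used m) => /=; last by rewrite (bigD1 p0) //= subrr mul0r.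
by rewrite [leRHS](eq_bigl xpredT) // => p; rewrite inE.
Qed.

End NullSets.

(** * Maxout networks with fixed pieces *)

Section SelectedNetwork.
Variables (R : realType) (n0 : nat) (ws : seq nat) (K : nat).
Local Notation Par := (Param n0 ws K).
Local Notation U := (Unit n0 ws).
Implicit Types (th : Par -> R) (sel : U -> 'I_K) (x : 'I_n0 -> R) (u : U)
  (J : {ffun U -> {set 'I_K}}).

Fixpoint layer_sel th sel x (l : nat) : nat -> R :=
  if l is l'.+1 then fun z =>
    match (insub l' : option 'I_(size ws)) with
    | Some lo => match (insub z : option 'I_(wd n0 ws (nat_of_ord lo).+1)) with
        | Some zo => preact th (layer_sel th sel x l') zo (sel (existT _ lo zo))
        | None => 0 end
    | None => 0 end
  else fun j => if (insub j : option 'I_n0) is Some jo then x jo else 0.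

Definition net_sel th sel x := \sum_(z < wd n0 ws (size ws))
  th (inr (Some z)) * layer_sel th sel x (size ws) z + th (inr None).

Lemma maxK_argmax (g : 'I_K -> R) k : (forall k', g k' <= g k) -> maxK g = g k.
Proof.
move=> g_le; apply/eqP; rewrite eq_le; apply/andP; split.
  apply: (big_ind (fun y => y <= g k)) => [|y1 y2 le1 le2|k' _]; last exact: g_le.
    have : k \in enum 'I_K by rewrite mem_enum.
    by case: (enum 'I_K) => //= k1 s _; apply: g_le.
  by rewrite ge_max le1 le2.
by rewrite /maxK (bigD1 k) //= le_max lexx.
Qed.

Lemma layer_sel_region th J sel x : act_region th J x -> (forall u, sel u \in J u) ->
  forall l z, layer th x l z = layer_sel th sel x l z.
Proof.
move=> xJ selJ; elim=> [|l IH] z //=.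
case: insubP => [lo _ elo|_] //; case: insubP => [zo _ ezo|_] //.
rewrite -(funext IH); apply: maxK_argmax => k'.
have := selJ (existT _ lo zo); rewrite -(xJ (existT _ lo zo)) inE => /forallP /(_ k').
by rewrite /zeta /= elo.
Qed.

Lemma net_sel_region th J sel x : act_region th J x -> (forall u, sel u \in J u) ->
  net th x = net_sel th sel x.
Proof.
move=> xJ selJ; rewrite /net /net_sel; congr (_ + _); apply: eq_bigr => z _.
by rewrite (layer_sel_region xJ selJ).
Qed.

Definition affine_map (F : ('I_n0 -> R) -> R) :=
  exists (w : 'I_n0 -> R) (c : R), forall x, F x = \sum_i w i * x i + c.

Lemma affine_map_comb m (w : 'I_m -> R) (F : 'I_m -> ('I_n0 -> R) -> R) (b : R) :
  (forall j, affine_map (F j)) -> affine_map (fun x => \sum_j w j * F j x + b).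
Proof.
move=> /fin_all_exists [v /fin_all_exists [c Fvc]].
exists (fun i => \sum_j w j * v j i), (\sum_j w j * c j + b) => x.
rewrite addrA; congr (_ + _).
under eq_bigr => j _ do rewrite Fvc mulrDr mulr_sumr.
rewrite big_split /= exchange_big; congr (_ + _); apply: eq_bigr => i _.
by rewrite mulr_suml; apply: eq_bigr => j _; rewrite mulrA.
Qed.

Lemma affine_map_layer_sel th sel l z : affine_map (fun x => layer_sel th sel x l z).
Proof.
have const0 : affine_map (fun=> 0).
  by exists (fun=> 0), 0 => x; rewrite big1 ?addr0 // => i _; rewrite mul0r.
elim: l z => [|l IH] z /=.
  case: insubP => [jo _ _|_] //; exists (fun i => (i == jo)%:R), 0 => x.
  rewrite addr0 (bigD1 jo) //= eqxx mul1r big1 ?addr0 // => i /negPf ->.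
  by rewrite mul0r.
case: insubP => [lo _ _|_] //; case: insubP => [zo _ _|_] //.
exact: affine_map_comb.
Qed.

Lemma affine_map_net_sel th sel : affine_map (net_sel th sel).
Proof. by apply: affine_map_comb => z; apply: affine_map_layer_sel. Qed.

Definition slope (F : ('I_n0 -> R) -> R) := F (fun=> 1) - F (fun=> 0).

Lemma slope_on_ball F (g : 'I_n0 -> R) c x0 r : affine_map F -> 0 < r ->
  (forall x, in_ball x0 r x -> F x = \sum_i g i * x i + c) -> slope F = \sum_i g i.
Proof.
move=> [w [d Fwd]] r_gt0 F_ball.
have x0_ball : in_ball x0 r x0 by move=> i; rewrite subrr normr0.
suff w_g i : w i = g i.
  rewrite /slope !Fwd [X in _ - (X + _)]big1 ?add0r ?addrK => [|i _]; last by rewrite mulr0.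
  by apply: eq_bigr => i _; rewrite mulr1 w_g.
pose x1 j := x0 j + r / 2 * (j == i)%:R.
have x1_ball : in_ball x0 r x1.
  move=> j; rewrite /x1 addrC addKr normrM gtr0_norm ?divr_gt0 //.
  by case: (j == i); rewrite ?normr1 ?normr0 ?mulr1 ?mulr0 // ltr_pdivrMr //; lra.
have x1E (v : 'I_n0 -> R) : \sum_j v j * x1 j = \sum_j v j * x0 j + v i * (r / 2).
  under eq_bigr => j _ do rewrite mulrDr; rewrite big_split /=; congr (_ + _).
  rewrite (bigD1 i) //= eqxx mulr1 big1 ?addr0 // => j /negPf ->.
  by rewrite !mulr0.
have := F_ball _ x1_ball; have := F_ball _ x0_ball; rewrite !Fwd !x1E => e0 e1.
have : (w i - g i) * (r / 2) = 0 by lra.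
by move/eqP; rewrite mulf_eq0 subr_eq0 mulf_eq0 invr_eq0 pnatr_eq0 (gt_eqF r_gt0) /= orbF => /eqP.
Qed.

Definition param_layer (p : Par) : nat :=
  if p is inl s then nat_of_ord (tag s) else size ws.

Lemma affine_in_preact (h : (Par -> R) -> nat -> R) (lo : 'I_(size ws))
    (zo : 'I_(wd n0 ws lo.+1)) k p :
  (forall z, affine_in p (fun th => h th z)) ->
  (param_layer p = lo -> forall z, independent_of p (fun th => h th z)) ->
  affine_in p (fun th => preact th (h th) zo k).
Proof.
move=> h_aff h_indep; apply: affine_inD; last exact: affine_in_coord.
apply: affine_in_sum => j; apply: affine_in_coordM => [pj|_]; last exact: h_aff.
by apply: h_indep; rewrite -pj.
Qed.

Lemma layer_sel_indep sel x l z p :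
  (l <= param_layer p)%N -> independent_of p (fun th => layer_sel th sel x l z).
Proof.
elim: l z => [|l IH] z le_lp th t //=.
case: insubP => [lo _ elo|_] //; case: insubP => [zo _ _|_] //.
have upd_other q : param_layer q = lo -> upd th p t q = th q.
  by move=> qlo; rewrite /upd; case: eqP => // qp; move: le_lp; rewrite -qp qlo elo ltnn.
rewrite /preact upd_other //; congr (_ + _); apply: eq_bigr => j _.
by rewrite upd_other // IH // ltnW.
Qed.

Lemma affine_in_layer_sel sel x l z p : affine_in p (fun th => layer_sel th sel x l z).
Proof.
elim: l z => [|l IH] z /=; first exact: affine_in_indep.
case: insubP => [lo _ elo|_]; last exact: affine_in_indep.
case: insubP => [zo _ _|_]; last exact: affine_in_indep.
by apply: affine_in_preact => // pl z'; apply: layer_sel_indep; rewrite pl elo.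
Qed.

Lemma affine_in_net_sel sel x p : affine_in p (fun th => net_sel th sel x).
Proof.
apply: affine_inD; last exact: affine_in_coord.
apply: affine_in_sum => z; apply: affine_in_coordM => [<-|_]; last exact: affine_in_layer_sel.
exact: layer_sel_indep.
Qed.

(* At input 0 the output is 0.  At input 1, if [u] does not select [k'] every
   unit outputs at least 1; switching [u] to [k'] turns it off and lowers the
   output strictly, since all other weights are 1. *)
Definition witness u (k' : 'I_K) (p : Par) : R :=
  match p with
  | inl (existT lo (zo, k, Some _)) => if (existT _ lo zo == u) && (k == k') then 0 else 1
  | inr (Some _) => 1
  | _ => 0
  end.

Lemma eta_unit u : existT _ (tag u) (tagged u) = u.
Proof. by case: u. Qed.

Lemma layer_sel_unit th sel x (lo : 'I_(size ws)) (zo : 'I_(wd n0 ws lo.+1)) :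
  layer_sel th sel x lo.+1 zo = preact th (layer_sel th sel x lo) zo (sel (existT _ lo zo)).
Proof. by rewrite /= !valK. Qed.

Lemma preact_witness u k' (h : nat -> R) (lo : 'I_(size ws)) (zo : 'I_(wd n0 ws lo.+1)) k :
  preact (witness u k') h zo k
  = if (existT _ lo zo == u) && (k == k') then 0 else \sum_(j < wd n0 ws lo) h j.
Proof.
rewrite /preact /= addr0; case: ifP => _; last by apply: eq_bigr => j _; rewrite mul1r.
by rewrite big1 // => j _; rewrite mul0r.
Qed.

Lemma sel_avoids sel u k' v : sel u != k' -> (v == u) && (sel v == k') = false.
Proof. by move=> selu; case: eqP => // ->; rewrite (negPf selu). Qed.

Hypothesis wd_gt0 : forall l, (l <= size ws)%N -> (0 < wd n0 ws l)%N.

Section Witness.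
Variables (u : U) (k' : 'I_K).
Local Notation L sel := (layer_sel (witness u k') sel (fun=> 1)).

Lemma layer_sel_witness0 sel l z : layer_sel (witness u k') sel (fun=> 0) l z = 0.
Proof.
elim: l z => [|l IH] z /=; first by case: insubP.
case: insubP => [lo _ _|_] //; case: insubP => [zo _ _|_] //.
by rewrite preact_witness big1 ?if_same // => j _; rewrite IH.
Qed.

Lemma net_sel_witness0 sel : net_sel (witness u k') sel (fun=> 0) = 0.
Proof. by rewrite /net_sel big1 ?addr0 // => z _; rewrite layer_sel_witness0 mulr0. Qed.

Lemma layer_sel_witness_ge0 sel l z : 0 <= L sel l z.
Proof.
elim: l z => [|l IH] z /=; first by case: insubP.
case: insubP => [lo _ _|_] //; case: insubP => [zo _ _|_] //.
by rewrite preact_witness; case: ifP => // _; rewrite sumr_ge0.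
Qed.

Lemma layer_sel_witness_ge1 sel l z : sel u != k' -> (l <= size ws)%N -> (z < wd n0 ws l)%N ->
  1 <= L sel l z.
Proof.
move=> selu; elim: l z => [|l IH] z le_l lt_z /=; first by case: insubP => //; rewrite lt_z.
case: insubP => [lo _ elo|]; last by rewrite le_l.
case: insubP => [zo _ _|]; last by rewrite elo lt_z.
subst l; rewrite preact_witness sel_avoids // (bigD1 (Ordinal (wd_gt0 (ltnW le_l)))) //=.
rewrite -[leLHS]addr0 lerD ?sumr_ge0 // => [|j _]; last exact: layer_sel_witness_ge0.
by apply: IH; rewrite ?wd_gt0 // ltnW.
Qed.

Lemma layer_sel_witness_mono selA selB l z : selA u != k' -> L selB l z <= L selA l z.
Proof.
move=> selAu; elim: l z => [|l IH] z //=.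
case: insubP => [lo _ _|_] //; case: insubP => [zo _ _|_] //.
rewrite !preact_witness (sel_avoids _ selAu); case: ifP => _; last exact: ler_sum.
by rewrite sumr_ge0 // => j _; apply: layer_sel_witness_ge0.
Qed.

Lemma layer_sel_witness_lt selA selB m : selA u != k' -> selB u = k' ->
  ((tag u).+1 + m <= size ws)%N ->
  exists2 z, (z < wd n0 ws ((tag u).+1 + m))%N &
    L selB ((tag u).+1 + m) z < L selA ((tag u).+1 + m) z.
Proof.
move=> selAu selBu; elim: m => [|m IH] le_m.
  rewrite addn0 in le_m *; exists (tagged u) => //.
  have -> : L selB (tag u).+1 (tagged u) = 0.
    by rewrite layer_sel_unit preact_witness eta_unit eqxx selBu eqxx.
  by apply: lt_le_trans ltr01 _; apply: layer_sel_witness_ge1.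
move: le_m; rewrite addnS => le_m.
have [z lt_z lt_Lz] := IH (ltnW le_m).
set l := ((tag u).+1 + m)%N in le_m lt_z lt_Lz *.
pose lo : 'I_(size ws) := Ordinal le_m.
have zo_lt : (0 < wd n0 ws lo.+1)%N by apply: wd_gt0.
exists 0%N => //; rewrite -[l.+1]/(lo.+1) -[0%N]/(nat_of_ord (Ordinal zo_lt)).
rewrite !layer_sel_unit !preact_witness.
have -> : (existT _ lo (Ordinal zo_lt) == u) = false.
  apply/eqP => /(f_equal (fun v : U => val (tag v))) /= lo_u.
  by move: (leq_addr m (tag u).+1); rewrite -/l -lo_u ltnn.
by apply: (ltr_sum_at (i0 := Ordinal lt_z)) => // j; apply: layer_sel_witness_mono.
Qed.

Lemma net_sel_witness_lt selA selB : selA u != k' -> selB u = k' ->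
  net_sel (witness u k') selB (fun=> 1) < net_sel (witness u k') selA (fun=> 1).
Proof.
move=> selAu selBu; rewrite /net_sel ltrD2r.
have := @layer_sel_witness_lt selA selB (size ws - (tag u).+1) selAu selBu.
rewrite subnKC // => /(_ (leqnn _)) [z lt_z lt_Lz].
apply: (ltr_sum_at (i0 := Ordinal lt_z)) => [j|]; rewrite /= !mul1r //.
exact: layer_sel_witness_mono.
Qed.

End Witness.

Lemma region_eq_no_input th J J' g g' : n0 = 0%N ->
  region_has_gradient th J g -> region_has_gradient th J' g' -> J = J'.
Proof.
move=> n0_eq0 [x [r [c [_ rJ]]]] [x' [r' [c' [_ rJ']]]].
have ball y s : in_ball y s x by move=> i; have := ltn_ord i; rewrite {2}n0_eq0.
by apply/ffunP => u; rewrite -((rJ _ (ball x r)).1 u) -((rJ' _ (ball x' r')).1 u).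
Qed.

Definition common_gradient th (J J' : {ffun U -> {set 'I_K}}) :=
  exists g, region_has_gradient th J g /\ region_has_gradient th J' g.

Lemma region_slope th J sel g : (forall u, sel u \in J u) -> region_has_gradient th J g ->
  slope (net_sel th sel) = \sum_i g i.
Proof.
move=> selJ [x0 [r [c [r_gt0 ball]]]].
apply: (slope_on_ball (c := c) (affine_map_net_sel th sel) r_gt0) => x /ball [xJ <-].
by rewrite (net_sel_region xJ selJ).
Qed.

Lemma exists_selection J u k : is_pattern J -> k \in J u ->
  exists2 sel, forall v, sel v \in J v & sel u = k.
Proof.
move=> J_ne kJ; have /fin_all_exists [sel selJ] v : exists k0, k0 \in J v.
  by have /set0Pn := J_ne v.
exists (fun v => if v == u then k else sel v) => [v|]; last by rewrite eqxx.
by case: eqP => [->|].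
Qed.

Lemma null_on_common_gradient J J' u k : is_pattern J -> is_pattern J' ->
  k \in J u -> k \notin J' u -> null_on setT (fun th => common_gradient th J J').
Proof.
move=> J_ne J'_ne kJ kJ'.
have [sel selJ selu] := exists_selection J_ne kJ.
have [k0 k0J'] := set0Pn _ (J'_ne u).
have [sel' selJ' _] := exists_selection J'_ne k0J'.
apply: (@null_on_sub _ _ _ _ (fun th => slope (net_sel th sel) - slope (net_sel th sel') = 0)).
  by move=> th [g [rJ rJ']]; rewrite (region_slope selJ rJ) (region_slope selJ' rJ') subrr.
apply: multiaffine_zero_null.
  split=> [th th' eq_th|p]; last by do 2![apply: affine_inB]; apply: affine_in_net_sel.
  by rewrite (_ : th = th') //; apply/funext => q; apply: eq_th; rewrite inE.
exists (witness u (sel' u)); rewrite /slope !net_sel_witness0 !subr0 subr_eq0 gt_eqF //.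
apply: net_sel_witness_lt => //; rewrite selu.
by apply: contraNneq kJ' => ->.
Qed.

Lemma null_on_pattern_pair J J' : is_pattern J -> is_pattern J' -> J != J' ->
  null_on setT (fun th => common_gradient th J J').
Proof.
move=> J_ne J'_ne neqJ.
have [u] : exists u, J u != J' u.
  apply/existsP; apply: contraNT neqJ => /existsPn eqJ.
  by apply/eqP/ffunP => v; apply/eqP/negPn.
rewrite eqEsubset negb_and => /orP [/subsetPn [k kJ kJ'] | /subsetPn [k kJ' kJ]].
  exact: null_on_common_gradient kJ kJ'.
apply: null_on_sub (null_on_common_gradient J'_ne J_ne kJ' kJ) => th [g [rJ rJ']].
by exists g.
Qed.

End SelectedNetwork.

Theorem lemma2 (R : realType) (n0 : nat) (ws : seq nat) (K : nat) :
  all (fun w => 0 < w)%N ws ->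
  lebesgue_null (fun th : Param n0 ws K -> R =>
    exists (J J' : {ffun Unit n0 ws -> {set 'I_K}}) (g : 'I_n0 -> R),
      [/\ is_pattern J, is_pattern J', J != J',
          region_has_gradient th J g & region_has_gradient th J' g]).
Proof.
move=> ws_gt0; apply: (null_on_setT_lebesgue (inr None)).
have [n0_eq0|n0_gt0] := posnP n0.
  apply: null_on_sub (null_on0 _) => th [J [J' [g [_ _ /eqP neqJ rJ rJ']]]].
  exact: neqJ (region_eq_no_input n0_eq0 rJ rJ').
have wd_gt0 l : (l <= size ws)%N -> (0 < wd n0 ws l)%N.
  by case: l => // l /(all_nthP 0%N ws_gt0).
apply: (@null_on_sub _ _ _ _ (fun th => exists JJ : _ * _, common_gradient th JJ.1 JJ.2 /\
  [/\ is_pattern JJ.1, is_pattern JJ.2 & JJ.1 != JJ.2])).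
  by move=> th [J [J' [g [J_ne J'_ne neqJ rJ rJ']]]]; exists (J, J'); split; first exists g.
apply: null_on_countable_union => -[J J'].
have [[J_ne J'_ne neqJ]|not_pair] := pselect [/\ is_pattern J, is_pattern J' & J != J'].
  by apply: null_on_sub (null_on_pattern_pair wd_gt0 J_ne J'_ne neqJ) => th [].
by apply: null_on_sub (null_on0 _) => th [_ ?].
Qed.
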